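(* For every $\epsilon>0$, every integer $k\ge1$ and every finite set $U$ with $|U|\ge k$ there is a constant $C_1=C_1(|U|,k,\epsilon)$ such that the following holds. Let $\{X_u\}_{u\in U}$ be finite non-empty sets, let $X_V=\prod_{u\in V}X_u$ for $V\subset U$, and let $\mathcal U_k$ be the collection of subsets of $U$ of cardinality exactly $k$. For each $V\in\mathcal U_k$ let $S_V\subset X_V$ satisfy $$\big\|S_V-\mathbb P(S_V)\big\|_{\Box^V(X_V)}\le\big(\tfrac12\mathbb P(S_V)\big)^{C_1},\qquad V\in\mathcal U_k .$$ Then $$\Big|\mathbb E_{x\in X_U}\prod_{V\in\mathcal U_k}S_V(x_V)-\prod_{V\in\mathcal U_k}\mathbb E_{x_V\in X_V}S_V(x_V)\Big|\le\epsilon\prod_{V\in\mathcal U_k}\mathbb E_{x_V\in X_V}S_V(x_V).$$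
   Context: Sets are identified with their indicator functions; $\mathbb E_{x\in X}$ denotes the uniform average over a finite set $X$, and $\mathbb P(S_V)=|S_V|/|X_V|$. For $x=(x_u)_{u\in U}\in X_U$ and $V\subset U$, $x_V=(x_u)_{u\in V}$. For a non-empty finite index set $V$ and $f:X_V\to\mathbb C$, the Gowers box norm is defined by $$\|f\|_{\Box^V(X_V)}^{2^{|V|}}=\mathbb E_{x^0,x^1\in X_V}\prod_{\omega\in\{0,1\}^V}\mathcal C^{|\omega|}f(x^{\omega}),$$ where $x^{\omega}=(x^{\omega_v}_v)_{v\in V}$, $|\omega|=\sum_v\omega_v$, and $\mathcal C$ is complex conjugation. (For real $f$ the conjugations can be ignored.) *)

From HB Require Import structures.
From mathcomp Require Import all_boot all_order all_algebra.
From mathcomp Require Import all_classical all_reals all_analysis.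
Set Implicit Arguments. Unset Strict Implicit. Unset Printing Implicit Defensive.
Import Order.TTheory GRing.Theory Num.Theory.
Local Open Scope ring_scope.

Section Defs.
Variable R : realType.
Variables (U : finType) (X : U -> finType).

(* X_V = prod_{u in V} X_u, as dependent finite functions on the elements of V *)
Definition XV (V : {set U}) : finType := {dffun forall i : {u : U | u \in V}, X (val i)}.

Definition XU : finType := {dffun forall u : U, X u}.

Definition restr (V : {set U}) (x : XU) : XV V := [ffun i => x (val i)].

Definition avg (T : finType) (f : T -> R) : R := (\sum_(t : T) f t) / #|T|%:R.

Definition dens (T : finType) (S : {set T}) : R := #|S|%:R / #|T|%:R.

Definition mixpt (V : {set U}) (om : {ffun {u : U | u \in V} -> bool}) (x0 x1 : XV V) : XV V :=
  [ffun i => if om i then x1 i else x0 i].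

(* ||f||_{Box^V}^{2^|V|} for real-valued f (conjugations are trivial) *)
Definition boxpow (V : {set U}) (f : XV V -> R) : R :=
  avg (fun p : XV V * XV V =>
    \prod_(om : {ffun {u : U | u \in V} -> bool}) f (mixpt om p.1 p.2)).

Definition boxnorm (V : {set U}) (f : XV V -> R) : R :=
  powR (boxpow f) (2 ^+ #|V|)^-1.
End Defs.

From Pilot Require Import Defs.
From HB Require Import structures.
From mathcomp Require Import all_boot all_order all_algebra.
From mathcomp Require Import all_classical all_reals all_analysis.
From mathcomp Require Import ring.
Set Implicit Arguments. Unset Strict Implicit. Unset Printing Implicit Defensive.
Import Order.TTheory GRing.Theory Num.Theory.
Local Open Scope ring_scope.

(* Applying the Cauchy-Schwarz inequality once per coordinate of V bounds
   E_x f(x_V) prod_v H_v(x) by ||f||_{Box^V} whenever each H_v takes values in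
   [0, 1] and does not depend on the coordinate v (generalised von Neumann).
   Now peel off the sparsest set V0 of the family: write 1_{S_V0} as
   P(S_V0) + (1_{S_V0} - P(S_V0)).  Every other V in U_k misses some coordinate
   of V0, so the product over the remaining sets splits into such factors H_v,
   and the error term is at most ||1_{S_V0} - P(S_V0)||_Box <= c P(S_V0)^N, which
   is at most c P(S_V0) prod_{V != V0} P(S_V) because V0 is the sparsest and there
   are fewer than N = 2^|U| sets.  Induction on the number of sets gives a total error
   c |U_k| prod_V P(S_V); the choice C1 = N + log2(N/eps) makes c = eps/N work. *)

Section Averages.
Variable R : realType.
Local Notation avg := (@avg R).

Lemma eq_avg (T : finType) (F G : T -> R) : F =1 G -> avg F = avg G.
Proof. by move=> FG; rewrite /Defs.avg (eq_bigr _ (fun t _ => FG t)). Qed.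

Lemma avg_cst (T : finType) (c : R) : (0 < #|T|)%N -> avg (fun _ : T => c) = c.
Proof.
by move=> T_gt0; rewrite /Defs.avg sumr_const -[c *+ _]mulr_natr mulfK // pnatr_eq0 -lt0n.
Qed.

Lemma avg_pair (T1 T2 : finType) (F : T1 * T2 -> R) :
  avg F = avg (fun x => avg (fun y => F (x, y))).
Proof.
rewrite /Defs.avg card_prod natrM invfM -mulr_suml -mulrA [_^-1 * _]mulrC.
by rewrite pair_bigA; congr (_ * _); apply: eq_bigr => -[].
Qed.

Lemma avg_reindex (T : finType) (h : T -> T) (F : T -> R) :
  injective h -> avg F = avg (F \o h).
Proof. by move=> h_inj; rewrite /Defs.avg (reindex_inj h_inj). Qed.

Lemma avgD (T : finType) (F G : T -> R) :
  avg (fun t => F t + G t) = avg F + avg G.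
Proof. by rewrite /Defs.avg big_split mulrDl. Qed.

Lemma avgZ (T : finType) (c : R) (F : T -> R) : avg (fun t => c * F t) = c * avg F.
Proof. by rewrite /Defs.avg -mulr_sumr mulrA. Qed.

Lemma avg_ge0 (T : finType) (F : T -> R) : (forall t, 0 <= F t) -> 0 <= avg F.
Proof. by move=> F_ge0; rewrite divr_ge0 ?sumr_ge0. Qed.

Lemma ler_avg (T : finType) (F G : T -> R) : (forall t, F t <= G t) -> avg F <= avg G.
Proof. by move=> FG; rewrite ler_wpM2r ?invr_ge0 ?ler_sum. Qed.

Lemma avg_fst (T1 T2 : finType) (F : T1 -> R) :
  (0 < #|T2|)%N -> avg (fun p : T1 * T2 => F p.1) = avg F.
Proof. by move=> T2_gt0; rewrite avg_pair; apply: eq_avg => x /=; rewrite avg_cst. Qed.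

Lemma avg_mul_pair (T1 T2 : finType) (F : T1 -> R) (G : T2 -> R) :
  avg (fun p : T1 * T2 => F p.1 * G p.2) = avg F * avg G.
Proof. by rewrite avg_pair mulrC -avgZ; apply: eq_avg => x /=; rewrite avgZ mulrC. Qed.

Lemma sqr_avg_le (T : finType) (F : T -> R) :
  (0 < #|T|)%N -> avg F ^+ 2 <= avg (fun t => F t ^+ 2).
Proof.
move=> T_gt0; set m := avg F.
have : 0 <= avg (fun t => (F t - m) ^+ 2) by apply: avg_ge0 => t; exact: sqr_ge0.
have -> : avg (fun t => (F t - m) ^+ 2) = avg (fun t => F t ^+ 2) - m ^+ 2.
  transitivity (avg (fun t => F t ^+ 2 + ((- 2 * m) * F t + m ^+ 2))).
    by apply: eq_avg => t; ring.
  by rewrite !avgD avgZ avg_cst // -/m; ring.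
by rewrite subr_ge0.
Qed.

Lemma avg_indicator (T : finType) (A : {set T}) :
  avg (fun t => ((t \in A)%:R : R)) = dens R A.
Proof.
rewrite /Defs.avg /dens -sum1_card natr_sum [X in _ = X / _]big_mkcond /=.
by congr (_ / _); apply: eq_bigr => t _; case: (t \in A).
Qed.

Lemma dens_ge0 (T : finType) (A : {set T}) : 0 <= dens R A.
Proof. by rewrite divr_ge0. Qed.

Lemma dens_le1 (T : finType) (A : {set T}) : dens R A <= 1.
Proof.
rewrite /dens; have [->|T_gt0] := posnP #|T|; first by rewrite invr0 mulr0.
by rewrite ler_pdivrMr ?ltr0n // mul1r ler_nat max_card.
Qed.
End Averages.

Lemma big_powersetU1 (T : finType) (R : Type) (idx : R) (op : Monoid.com_law idx)
    (F : {set T} -> R) (u : T) (W : {set T}) :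
  u \notin W ->
  \big[op/idx]_(w in powerset (u |: W)) F w =
    op (\big[op/idx]_(w in powerset W) F w) (\big[op/idx]_(w in powerset W) F (u |: w)).
Proof.
move=> uW; rewrite (big_setID [set w : {set T} | u \notin w]); congr (op _ _).
  by apply: eq_bigl => w; rewrite !inE -[in RHS](finset.setU1K uW) subsetD1.
have -> : powerset (u |: W) :\: [set w : {set T} | u \notin w] = [set u |: w | w in powerset W].
  apply/setP => w; rewrite !inE negbK; apply/andP/imsetP => [[sw uw]|].
    exists (w :\ u); last by rewrite finset.setD1K.
    by rewrite powersetE -(finset.setU1K uW) finset.setSD.
  move=> [w' + ->]; rewrite powersetE => sw'.
  by rewrite setU11; split=> //; exact: finset.setUS.
rewrite finset.big_imset //=; apply: (can_in_inj (g := fun w => w :\ u)) => w.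
rewrite powersetE => sw; rewrite finset.setU1K //.
by apply: contra uW; apply: (fintype.subsetP sw).
Qed.

Section Cube.
Variable R : realType.
Variables (U : finType) (X : U -> finType).
Local Notation XU := (XU X).
Local Notation avg := (@avg R).

Definition mix (A : {set U}) (x y : XU) : XU := [ffun v => if v \in A then y v else x v].

Lemma mixE A x y v : mix A x y v = if v \in A then y v else x v.
Proof. by rewrite ffunE. Qed.

(* Resample coordinate u of both points of z from w; paired with [exch u w z]
   this is an involution of (z, w), hence [avg_exch]. *)
Definition exch (u : U) (z w : XU * XU) : XU * XU :=
  (mix [set u] z.1 w.1, mix [set u] z.2 w.2).

Lemma exchK u z w : exch u (exch u z w) (exch u w z) = z.
Proof.
case: z w => [z1 z2] [w1 w2]; rewrite /exch /=.
by congr pair; apply/ffunP => v; rewrite !mixE; case: (v \in _).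
Qed.

Lemma avg_exch u (f : XU * XU -> R) : (0 < #|XU|)%N ->
  avg f = avg (fun z => avg (fun w => f (exch u z w))).
Proof.
move=> XU_gt0; pose e (p : (XU * XU) * (XU * XU)) := (exch u p.1 p.2, exch u p.2 p.1).
have e_inv : involutive e by move=> [z w]; rewrite /e /= !exchK.
rewrite -[RHS](avg_pair (fun p => f (exch u p.1 p.2))).
rewrite (avg_reindex _ (inv_inj e_inv)) /= (eq_avg (G := fun p => f p.1)).
  by rewrite avg_fst // card_prod muln_gt0 XU_gt0.
by move=> [z w] /=; rewrite exchK.
Qed.

Definition vertex (w : {set U}) (z : XU * XU) : XU := mix w z.1 z.2.

Definition flip (u : U) (z : XU * XU) : XU * XU := (mix [set u] z.1 z.2, z.2).

Lemma vertex_exch (u : U) (w : {set U}) (z y : XU * XU) :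
  vertex w (exch u z y) = mix [set u] (vertex w z) (vertex w y).
Proof.
by apply/ffunP => v; rewrite /vertex /= !mixE; case: (v \in w); case: (v \in [set u]).
Qed.

Lemma vertex_exch_fst (u : U) (w : {set U}) (z y : XU * XU) : u \notin w ->
  vertex w (exch u z y) = vertex w (exch u z (y.1, y.1)).
Proof.
move=> uw; apply/ffunP => v; rewrite /vertex /= !mixE /= ?mixE inE.
by case: eqP => [->|_]; rewrite ?(negbTE uw).
Qed.

Lemma vertex_flip_exch (u : U) (w : {set U}) (z y : XU * XU) : u \notin w ->
  vertex w (flip u (exch u z y)) = vertex w (exch u z (y.2, y.2)).
Proof.
move=> uw; apply/ffunP => v; rewrite /vertex /= !mixE /= ?mixE inE.
by case: eqP => [->|_]; rewrite ?(negbTE uw).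
Qed.

Lemma vertex_flip (u : U) (w : {set U}) (z : XU * XU) :
  vertex w (flip u z) = vertex (u |: w) z.
Proof. by apply/ffunP => v; rewrite /vertex /= !mixE !inE; case: (v \in w); case: (v == u). Qed.

Lemma vertex_set0 (z : XU * XU) : vertex finset.set0 z = z.1.
Proof. by apply/ffunP => v; rewrite mixE inE. Qed.

Hypothesis XU_gt0 : (0 < #|XU|)%N.

(* A ignores the u-coordinates of z, B only sees that of z.1, and B' is B read
   off z.2 in coordinate u: averaging out coordinate u first and applying
   Cauchy-Schwarz to that inner average gives the bound. *)
Lemma cauchy_schwarz_exch u (A B B' : XU * XU -> R) :
  (forall z, 0 <= A z <= 1) ->
  (forall z w, A (exch u z w) = A z) ->
  (forall z w, B (exch u z w) = B (exch u z (w.1, w.1))) ->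
  (forall z w, B' (exch u z w) = B (exch u z (w.2, w.2))) ->
  avg (fun z => A z * B z) ^+ 2 <= avg (fun z => B z * B' z).
Proof.
move=> A01 A_exch B_exch B'_exch.
pose b z := avg (fun y : XU => B (exch u z (y, y))).
have -> : avg (fun z => A z * B z) = avg (fun z => A z * b z).
  rewrite (avg_exch u _ XU_gt0); apply: eq_avg => z.
  rewrite /b -avgZ -[RHS](avg_fst _ XU_gt0).
  by apply: eq_avg => w; rewrite A_exch B_exch.
have -> : avg (fun z => B z * B' z) = avg (fun z => b z ^+ 2).
  rewrite (avg_exch u _ XU_gt0); apply: eq_avg => z.
  by rewrite /b expr2 -avg_mul_pair; apply: eq_avg => w; rewrite B_exch B'_exch.
apply: le_trans (sqr_avg_le _ _) _; first by rewrite card_prod muln_gt0 XU_gt0.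
apply: ler_avg => z; rewrite exprMn ler_piMl ?sqr_ge0 //.
by have /andP[A_ge0 A_le1] := A01 z; rewrite expr2 mulr_ile1.
Qed.

Variables (Phi : XU -> R) (H : U -> XU -> R).
Hypothesis H01 : forall v x, 0 <= H v x <= 1.
Hypothesis H_mix : forall v x y, H v (mix [set v] x y) = H v x.

(* For W = V and H = 1 off V this averages to ||f||^(2^|V|) ([boxpow_cube_prod]). *)
Definition cube_prod (W : {set U}) (z : XU * XU) : R :=
  \prod_(w in powerset W) (Phi (vertex w z) * \prod_(v | v \notin W) H v (vertex w z)).

Lemma cube_prod_set0 (z : XU * XU) : cube_prod finset.set0 z = Phi z.1 * \prod_v H v z.1.
Proof.
rewrite /cube_prod powerset0 big_set1 vertex_set0; congr (_ * _).
by apply: eq_bigl => v; rewrite inE.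
Qed.

Lemma cube_prod_sqr_le (u : U) (W : {set U}) :
  u \notin W -> avg (cube_prod W) ^+ 2 <= avg (cube_prod (u |: W)).
Proof.
move=> uW; have u_notin w : w \in powerset W -> u \notin w.
  by rewrite powersetE => sw; apply: contra uW; apply: (fintype.subsetP sw).
pose K x := Phi x * \prod_(v | v \notin u |: W) H v x.
pose A z := \prod_(w in powerset W) H u (vertex w z).
pose B z := \prod_(w in powerset W) K (vertex w z).
have cubeW z : cube_prod W z = A z * B z.
  rewrite /cube_prod /A /B -big_split /=; apply: eq_bigr => w _.
  rewrite /K (bigD1 u) //= mulrCA; congr (_ * (_ * _)).
  by apply: eq_bigl => v; rewrite !inE negb_or andbC.
have cubeUW z : cube_prod (u |: W) z = B z * B (flip u z).
  rewrite /cube_prod big_powersetU1 //; congr (_ * _).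
  by apply: eq_bigr => w _; rewrite vertex_flip.
rewrite (eq_avg cubeW) (eq_avg cubeUW); apply: (cauchy_schwarz_exch (u := u)).
- move=> z; rewrite prodr_ile1 ?andbT ?prodr_ge0 // => w _.
  by case/andP: (H01 u (vertex w z)).
- by move=> z y; apply: eq_bigr => w _; rewrite vertex_exch H_mix.
- by move=> z y; apply: eq_bigr => w /u_notin uw; rewrite vertex_exch_fst.
- by move=> z y; apply: eq_bigr => w /u_notin uw; rewrite vertex_flip_exch.
Qed.

Lemma cube_prod_bound (W : {set U}) :
  `|avg (fun x => Phi x * \prod_v H v x)| ^+ (2 ^ #|W|) <= `|avg (cube_prod W)|.
Proof.
have [n] := ubnP #|W|; elim: n W => // n IH W ltWn.
have [->|/set0Pn[u uW]] := eqVneq W finset.set0.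
  rewrite cards0 expn0 expr1 (eq_avg cube_prod_set0).
  by rewrite (avg_fst (fun x => Phi x * \prod_v H v x) XU_gt0).
have uWu : u \notin W :\ u by rewrite !inE eqxx.
have cardW : #|W| = #|W :\ u|.+1 by rewrite (cardsD1 u W) uW.
have := cube_prod_sqr_le uWu; rewrite finset.setD1K // => sqr_le.
rewrite cardW expnS mulnC exprM; apply: le_trans (le_trans sqr_le (ler_norm _)).
rewrite -[X in _ <= X](real_normK (num_real _)) ler_pXn2r ?nnegrE ?exprn_ge0 //.
by apply: IH; rewrite -ltnS -cardW.
Qed.
End Cube.

Section BoxNorm.
Variable R : realType.
Variables (U : finType) (X : U -> finType).
Local Notation XU := (XU X).
Local Notation avg := (@avg R).

(* x with its V-coordinates overwritten by p *)
Definition ext (V : {set U}) (p : XV X V) (x : XU) : XU :=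
  [ffun v => (if v \in V as b return (v \in V = b -> X v)
              then fun h => p (exist _ v h) else fun _ => x v) (erefl _)].

Lemma ext_in (V : {set U}) (p : XV X V) (x : XU) (v : U) (h : v \in V) :
  ext p x v = p (exist _ v h).
Proof.
rewrite ffunE; move: (erefl (v \in V)).
by rewrite {2 3}h => e; rewrite (bool_irrelevance e h).
Qed.

Lemma ext_out (V : {set U}) (p : XV X V) (x : XU) (v : U) :
  v \notin V -> ext p x v = x v.
Proof. by move=> /negbTE vV; rewrite ffunE; move: (erefl (v \in V)); rewrite {2 3}vV. Qed.

Lemma restr_ext (V : {set U}) (p : XV X V) (x : XU) : restr V (ext p x) = p.
Proof. by apply/ffunP => -[v h]; rewrite ffunE ext_in. Qed.

Lemma ext_restr (V : {set U}) (p : XV X V) (x : XU) : ext (restr V x) (ext p x) = x.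
Proof.
apply/ffunP => v; have [h|h] := boolP (v \in V); first by rewrite !ext_in ffunE.
by rewrite !ext_out.
Qed.

Hypothesis XU_gt0 : (0 < #|XU|)%N.

Lemma card_XV_gt0 (V : {set U}) : (0 < #|XV X V|)%N.
Proof. by have /card_gt0P[x _] := XU_gt0; apply/card_gt0P; exists (restr V x). Qed.

Lemma avg_restr (V : {set U}) (g : XV X V -> R) :
  avg (fun x => g (restr V x)) = avg g.
Proof.
pose e (q : XU * XV X V) := (ext q.2 q.1, restr V q.1).
have e_inv : involutive e by move=> [x p]; rewrite /e /= ext_restr restr_ext.
rewrite -(avg_fst (fun x => g (restr V x)) (card_XV_gt0 V)).
rewrite (avg_reindex _ (inv_inj e_inv)) /= (eq_avg (G := fun q => g q.2)).
  by rewrite avg_pair /= avg_cst.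
by move=> [x p] /=; rewrite restr_ext.
Qed.

Definition omega_of (V w : {set U}) : {ffun {u : U | u \in V} -> bool} :=
  [ffun i => val i \in w].

Lemma big_omega (V : {set U}) (F : {ffun {u : U | u \in V} -> bool} -> R) :
  \prod_om F om = \prod_(w in powerset V) F (omega_of V w).
Proof.
rewrite (reindex_onto (omega_of V) (fun om => val @: [set i | om i])); last first.
  by move=> om _; apply/ffunP => i; rewrite ffunE (mem_imset _ _ val_inj) inE.
apply: eq_bigl => w; rewrite powersetE; apply/eqP/idP => [<-|sw].
  by apply/fintype.subsetP => v /imsetP[i _ ->]; exact: valP i.
apply/setP => v; apply/imsetP/idP => [[i]|vw]; first by rewrite inE ffunE => iw ->.
by exists (exist _ v (fintype.subsetP sw v vw)); rewrite // inE ffunE.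
Qed.

Lemma boxpow_vertex (V : {set U}) (f : XV X V -> R) :
  boxpow f = avg (fun z => \prod_(w in powerset V) f (restr V (vertex w z))).
Proof.
pose G (p : XV X V * XV X V) := \prod_om f (mixpt om p.1 p.2).
have Gz z : \prod_(w in powerset V) f (restr V (vertex w z)) =
            G (restr V z.1, restr V z.2).
  by rewrite /G big_omega; apply: eq_bigr => w _; congr f; apply/ffunP => i; rewrite !ffunE.
rewrite (eq_avg Gz) avg_pair /boxpow -/G avg_pair -avg_restr.
by apply: eq_avg => x /=; rewrite -avg_restr.
Qed.

Lemma boxpow_cube_prod (V : {set U}) (f : XV X V -> R) (H : U -> XU -> R) :
  (forall v x, v \notin V -> H v x = 1) ->
  avg (cube_prod (fun x => f (restr V x)) H V) = boxpow f.
Proof.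
move=> H1; rewrite boxpow_vertex; apply: eq_avg => z; apply: eq_bigr => w _.
by rewrite big1 ?mulr1 // => v /H1->.
Qed.

Lemma boxpow_ge0 (V : {set U}) (f : XV X V -> R) : V != finset.set0 -> 0 <= boxpow f.
Proof.
case/set0Pn => u uV; have uVu : u \notin V :\ u by rewrite !inE eqxx.
have H01 (v : U) (x : XU) : 0 <= (1 : R) <= 1 by rewrite lexx ler01.
have := cube_prod_sqr_le XU_gt0 (fun x => f (restr V x)) H01 (fun _ _ _ => erefl) uVu.
by rewrite finset.setD1K // boxpow_cube_prod //; apply: le_trans; exact: sqr_ge0.
Qed.

Theorem gen_von_neumann (V : {set U}) (f : XV X V -> R) (H : U -> XU -> R) :
  V != finset.set0 ->
  (forall v x, 0 <= H v x <= 1) ->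
  (forall v x y, H v (mix [set v] x y) = H v x) ->
  (forall v x, v \notin V -> H v x = 1) ->
  `|avg (fun x => f (restr V x) * \prod_v H v x)| <= boxnorm f.
Proof.
move=> V0 H01 H_mix H1; set a := `|avg _|; have a_ge0 : 0 <= a := normr_ge0 _.
have := cube_prod_bound XU_gt0 (fun x => f (restr V x)) H01 H_mix V.
rewrite boxpow_cube_prod // [`|boxpow _|]ger0_norm ?boxpow_ge0 // => a_le.
have -> : a = powR (a ^+ (2 ^ #|V|)) (2 ^+ #|V|)^-1.
  by rewrite -powR_mulrn // -powRrM natrX mulfV ?powRr1 // gt_eqF ?exprn_gt0.
by apply: ge0_ler_powR; rewrite ?nnegrE ?invr_ge0 ?exprn_ge0 ?boxpow_ge0.
Qed.
End BoxNorm.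

Lemma setD_neq0_of_card (T : finType) (A B : {set T}) :
  (#|B| <= #|A|)%N -> A != B -> A :\: B != finset.set0.
Proof.
by move=> BA; apply: contraNneq => /eqP; rewrite finset.setD_eq0 eqEcard BA andbT.
Qed.

Lemma exp_le_mul_prod (R : realFieldType) (I : finType) (P : {pred I}) (a : I -> R)
    (d : R) (N : nat) :
  0 <= d <= 1 -> (forall i, P i -> d <= a i) -> (#|P| < N)%N ->
  d ^+ N <= d * \prod_(i in P) a i.
Proof.
move=> /andP[d_ge0 d_le1] d_le ltPN.
apply: le_trans (ler_wiXn2l d_ge0 d_le1 ltPN) _.
rewrite exprS ler_wpM2l // -prodr_const.
by apply: ler_prod => i Pi; rewrite d_ge0 d_le.
Qed.

Section ProductOfIndicators.
Variable R : realType.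
Variables (U : finType) (X : U -> finType).
Local Notation XU := (XU X).
Local Notation avg := (@avg R).
Hypothesis XU_gt0 : (0 < #|XU|)%N.
Variable S : forall V : {set U}, {set XV X V}.
Variable k : nat.
Hypothesis k_gt0 : (0 < k)%N.

Definition ind (V : {set U}) (x : XU) : R := (restr V x \in S V)%:R.

Local Notation dS V := (dens R (S V)).

Lemma ind01 (V : {set U}) (x : XU) : 0 <= ind V x <= 1.
Proof. by rewrite /ind; case: (_ \in _); rewrite ?lexx ?ler01. Qed.

Lemma ind_mix (V : {set U}) (v : U) (x y : XU) :
  v \notin V -> ind V (mix [set v] x y) = ind V x.
Proof.
move=> vV; rewrite /ind (_ : restr V _ = restr V x) //.
apply/ffunP => i; rewrite !ffunE inE.
by case: eqP => // vi; move: vV; rewrite -vi (valP i).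
Qed.

Lemma centered_prod_ind_le (V : {set U}) (G : {set {set U}}) :
  #|V| = k -> V \notin G -> (forall W, W \in G -> #|W| = k) ->
  `|avg (fun x => (ind V x - dS V) * \prod_(W in G) ind W x)|
    <= boxnorm (fun y : XV X V => (y \in S V)%:R - dS V).
Proof.
move=> Vk VG Gk; have /card_gt0P[u0 _] : (0 < #|V|)%N by rewrite Vk.
(* Every W in G misses the coordinate p W of V, so ind W does not depend on it. *)
pose p W := odflt u0 [pick v in V :\: W].
have pP W : W \in G -> p W \in V :\: W.
  move=> WG; have /set0Pn[v vVW] : V :\: W != finset.set0.
    by rewrite setD_neq0_of_card ?(Gk W WG) ?Vk //; apply: contraNneq VG => ->.
  by rewrite /p; case: pickP => [//|/(_ v)]; rewrite vVW.
pose H v x := \prod_(W in G | p W == v) ind W x.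
rewrite (eq_avg (G := fun x => ((restr V x \in S V)%:R - dS V) * \prod_v H v x)).
- apply: gen_von_neumann => //.
  + by rewrite -card_gt0 Vk.
  + move=> v x; rewrite prodr_ile1 ?andbT => [|W _]; last exact: ind01.
    by apply: prodr_ge0 => W _; case/andP: (ind01 W x).
  + move=> v x y; apply: eq_bigr => W /andP[WG /eqP pW].
    by apply: ind_mix; have := pP W WG; rewrite pW inE => /andP[].
  + move=> v x vV; apply: big1 => W /andP[WG /eqP pW].
    by have := pP W WG; rewrite pW inE (negbTE vV) andbF.
- by move=> x; rewrite (partition_big p predT).
Qed.

Lemma avg_prod_ind_le (c : R) (N : nat) (G : {set {set U}}) :
  0 <= c ->
  (forall V : {set U}, #|V| = k ->
     boxnorm (fun y : XV X V => (y \in S V)%:R - dS V) <= c * dS V ^+ N) ->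
  (#|G| <= N)%N -> (forall V, V \in G -> #|V| = k) ->
  `|avg (fun x => \prod_(V in G) ind V x) - \prod_(V in G) dS V|
    <= c * #|G|%:R * \prod_(V in G) dS V.
Proof.
move=> c_ge0 box_small; have [n] := ubnP #|G|; elim: n G => // n IH G ltGn GN Gk.
have [->|/set0Pn[V0 V0G]] := eqVneq G finset.set0.
  rewrite cards0 mulr0 mul0r big_set0 (eq_avg (G := fun _ => 1)) ?avg_cst ?subrr ?normr0 //.
  by move=> x; rewrite big_set0.
have [Vs VsG Vs_min] := arg_minP (fun V => dS V) V0G; have {}VsG : Vs \in G := VsG.
pose G' := G :\ Vs; pose D' := \prod_(V in G') dS V; set ds := dS Vs.
have cardG : #|G| = #|G'|.+1 by rewrite (cardsD1 Vs G) VsG.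
have ds_ge0 : 0 <= ds := dens_ge0 _ _.
have G'k V : V \in G' -> #|V| = k by rewrite !inE => /andP[_ /Gk].
have G'N : (#|G'| <= N)%N by apply: leq_trans GN; rewrite cardG.
have ltG'n : (#|G'| < n)%N by rewrite -ltnS -cardG.
have IH' := IH G' ltG'n G'N G'k.
have centered : `|avg (fun x => (ind Vs x - ds) * \prod_(V in G') ind V x)| <= c * (ds * D').
  apply: le_trans (centered_prod_ind_le _ _ G'k) _; rewrite ?Gk ?inE ?eqxx //.
  apply: le_trans (box_small _ (Gk _ VsG)) _; rewrite ler_wpM2l // exp_le_mul_prod //.
  - by rewrite ds_ge0 dens_le1.
  - by move=> V /setD1P[_ /Vs_min].
  - by rewrite -cardG.
rewrite (big_setD1 Vs VsG) -/G' -/D' (eq_avg (G := fun x =>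
  (ind Vs x - ds) * \prod_(V in G') ind V x + ds * \prod_(V in G') ind V x)); last first.
  by move=> x; rewrite (big_setD1 Vs VsG) /=; ring.
rewrite avgD avgZ -addrA -mulrBr; apply: le_trans (ler_normD _ _) _.
have -> : c * #|G|%:R * (ds * D') = c * (ds * D') + ds * (c * #|G'|%:R * D').
  by rewrite cardG -addn1 natrD; ring.
apply: lerD; first exact: centered.
by rewrite normrM (ger0_norm ds_ge0) ler_wpM2l.
Qed.
End ProductOfIndicators.

Lemma card_XU_gt0 (U : finType) (X : U -> finType) :
  (forall u, (0 < #|X u|)%N) -> (0 < #|XU X|)%N.
Proof.
move=> X_gt0; rewrite card_dep_ffun /image_mem.
by elim: (enum_mem _) => //= u s IH; rewrite muln_gt0 X_gt0 IH.
Qed.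

Lemma powR_half_le (R : realType) (eps d : R) (N : nat) :
  0 < eps -> (0 < N)%N -> 0 <= d <= 1 ->
  powR (d / 2) (N + Num.bound (N%:R / eps))%:R <= eps / N%:R * d ^+ N.
Proof.
move=> eps_gt0 N_gt0 /andP[d_ge0 d_le1]; set M := Num.bound _.
have half_le : (2^-1 : R) ^+ (N + M) <= eps / N%:R.
  apply: le_trans (ler_wiXn2l _ _ (leq_addl N M)) _; rewrite ?invr_ge0 ?invf_le1 ?ler1n //.
  rewrite exprVn invf_ple ?posrE ?exprn_gt0 ?divr_gt0 ?ltr0n // GRing.invf_div.
  exact/ltW/upper_nthrootP.
rewrite powR_mulrn ?divr_ge0 // exprMn exprD -mulrA mulrC ler_wpM2r ?exprn_ge0 //.
by apply: le_trans half_le; rewrite ler_piMl ?exprn_ge0 ?exprn_ile1 ?invr_ge0.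
Qed.

Theorem corollary4p5 (R : realType) (eps : R) (k : nat) (U : finType) :
  0 < eps -> (1 <= k)%N -> (k <= #|U|)%N ->
  exists C1 : R,
    forall (X : U -> finType) (S : forall V : {set U}, {set XV X V}),
      (forall u, (0 < #|X u|)%N) ->
      (forall V : {set U}, #|V| = k ->
         boxnorm (fun y : XV X V => (y \in S V)%:R - dens R (S V))
           <= powR (dens R (S V) / 2) C1) ->
      `| avg (fun x : XU X => \prod_(V : {set U} | #|V| == k) ((restr V x \in S V)%:R : R))
         - \prod_(V : {set U} | #|V| == k) avg (fun y : XV X V => ((y \in S V)%:R : R)) |
      <= eps * \prod_(V : {set U} | #|V| == k) avg (fun y : XV X V => ((y \in S V)%:R : R)).
Proof.
move=> eps_gt0 k_gt0 _; pose N := #|{: {set U}}|.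
have N_gt0 : (0 < N)%N by apply/card_gt0P; exists finset.set0.
exists (N + Num.bound (N%:R / eps))%:R => X S X_gt0 box_small.
pose G := [set V : {set U} | #|V| == k].
have prodG (F : {set U} -> R) : \prod_(V in G) F V = \prod_(V : {set U} | #|V| == k) F V.
  by apply: eq_bigl => V; rewrite inE.
have c_ge0 : 0 <= eps / N%:R := divr_ge0 (ltW eps_gt0) (ler0n _ _).
have box_small_N (V : {set U}) : #|V| = k ->
    boxnorm (fun y : XV X V => (y \in S V)%:R - dens R (S V)) <= eps / N%:R * dens R (S V) ^+ N.
  move=> Vk; apply: le_trans (box_small V Vk) (powR_half_le eps_gt0 N_gt0 _).
  by rewrite dens_ge0 dens_le1.
have Gk (V : {set U}) : V \in G -> #|V| = k by rewrite inE => /eqP.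
have := avg_prod_ind_le (card_XU_gt0 X_gt0) k_gt0 c_ge0 box_small_N (max_card G) Gk.
rewrite !prodG (eq_avg (fun x => prodG (ind R S ^~ x))).
rewrite (eq_bigr _ (fun V _ => avg_indicator R (S V))) => bound.
apply: le_trans bound _; apply: ler_wpM2r; first by apply: prodr_ge0 => V _; exact: dens_ge0.
by rewrite mulrAC ler_pdivrMr ?ltr0n // ler_pM2l // ler_nat max_card.
Qed.
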